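(* Let $\mathcal{H}$ be a real Hilbert space, $\Gamma\subseteq\mathbb{R}_{++}$ nonempty, $(T_\gamma)_{\gamma\in\Gamma}$ a family of operators on $\mathcal{H}$ with $\operatorname{Fix}T_\gamma\neq\emptyset$ for all $\gamma\in\Gamma$, and $(\mathcal{Q}_{\delta\leftarrow\gamma})_{\gamma,\delta\in\Gamma}$ fixed-point relocators for $(T_\gamma)_{\gamma\in\Gamma}$. Suppose that for each bounded subset $S\subseteq\bigcup_{\gamma\in\Gamma}(\operatorname{Fix}T_\gamma\times\{\gamma\})$ there exists $L>0$ with $\|\mathcal{Q}_{\delta\leftarrow\gamma}x-\mathcal{Q}_{\gamma\leftarrow\gamma}x\|\le L|\delta-\gamma|$ for all $\delta\in\Gamma$ and $(x,\gamma)\in S$, and that $(\gamma_n)_{n\in\mathbb{N}}\subseteq\Gamma$ converges $R$-linearly to $\gamma^*\in\Gamma$. Given $c_0\in\operatorname{Fix}T_{\gamma_0}$, define $c_{n+1}:=\mathcal{Q}_{\gamma_{n+1}\leftarrow\gamma_n}c_n$ for all $n\in\mathbb{N}$. Then $c_n\in\operatorname{Fix}T_{\gamma_n}$ for all $n\in\mathbb{N}$, and $(c_n)_{n\in\mathbb{N}}$ converges $R$-linearly to $\mathcal{Q}_{\gamma^*\leftarrow\gamma_0}c_0\in\operatorname{Fix}T_{\gamma^*}$.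
   Context: $\operatorname{Fix}T=\{x:Tx=x\}$. Fixed-point relocators: given a nonempty $\Gamma\subseteq\mathbb{R}_{++}$ and operators $(T_\gamma)_{\gamma\in\Gamma}$ on $\mathcal{H}$, a family of operators $(\mathcal{Q}_{\delta\leftarrow\gamma})_{\delta,\gamma\in\Gamma}$ on $\mathcal{H}$ is called fixed-point relocators for $(T_\gamma)$ (with Lipschitz constants $(\mathcal{L}_{\delta\leftarrow\gamma})$ in $[1,\infty)$) if: (a) for all $\gamma,\delta\in\Gamma$, the restriction of $\mathcal{Q}_{\delta\leftarrow\gamma}$ to $\operatorname{Fix}T_\gamma$ is a bijection onto $\operatorname{Fix}T_\delta$; (b) for all $\gamma\in\Gamma$ and $x\in\operatorname{Fix}T_\gamma$, $\delta\mapsto\mathcal{Q}_{\delta\leftarrow\gamma}x$ is continuous on $\Gamma$; (c) for all $\gamma,\delta,\epsilon\in\Gamma$ and $x\in\operatorname{Fix}T_\gamma$, $\mathcal{Q}_{\epsilon\leftarrow\delta}\mathcal{Q}_{\delta\leftarrow\gamma}x=\mathcal{Q}_{\epsilon\leftarrow\gamma}x$; (d) each $\mathcal{Q}_{\delta\leftarrow\gamma}$ is $\mathcal{L}_{\delta\leftarrow\gamma}$-Lipschitz. A sequence $(a_n)$ converges $R$-linearly to $a$ if there exist $C\ge0$, $r\in(0,1)$ with $\|a_n-a\|\le Cr^n$ for all $n$. *)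

From HB Require Import structures.
From mathcomp Require Import all_boot all_order all_algebra.
From mathcomp Require Import all_classical all_reals all_analysis.
Set Implicit Arguments. Unset Strict Implicit. Unset Printing Implicit Defensive.
Import Order.TTheory GRing.Theory Num.Theory.
Import numFieldNormedType.Exports.
Local Open Scope classical_set_scope.
Local Open Scope ring_scope.

(* A real Hilbert space: a complete normed space over the reals whose norm
   is induced by a (symmetric, bilinear, positive) inner product [ip]. *)
Definition is_inner_product (R : realType) (V : completeNormedModType R)
  (ip : V -> V -> R) : Prop :=
  [/\ (forall x y, ip x y = ip y x),
      (forall a x y z, ip (a *: x + y) z = a * ip x z + ip y z)
    & (forall x, ip x x = `|x| ^+ 2)].

Definition Fix (V : Type) (T : V -> V) : set V := [set x | T x = x].

Definition lipschitz_with (R : realType) (V : normedModType R)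
  (L : R) (f : V -> V) : Prop :=
  forall x y, `|f x - f y| <= L * `|x - y|.

(* Fixed-point relocators (Q d g is Q_{d <- g}) *)
Definition fixed_point_relocators (R : realType) (V : normedModType R)
  (Gamma : set R) (T : R -> V -> V) (Q : R -> R -> V -> V) : Prop :=
  [/\
      (forall g d, Gamma g -> Gamma d -> set_bij (Fix (T g)) (Fix (T d)) (Q d g)),
      (forall g x, Gamma g -> Fix (T g) x ->
         {within Gamma, continuous (fun d => Q d g x)}),
      (forall g d e x, Gamma g -> Gamma d -> Gamma e -> Fix (T g) x ->
         Q e d (Q d g x) = Q e g x)
    &
      (forall g d, Gamma g -> Gamma d ->
         exists L : R, 1 <= L /\ lipschitz_with L (Q d g))].

Definition R_linear_cvg (R : realType) (V : normedModType R)
  (a : nat -> V) (l : V) : Prop :=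
  exists C r : R, 0 <= C /\ 0 < r < 1 /\
    forall n, `|a n - l| <= C * r ^+ n.

Definition bounded_pairs (R : realType) (V : normedModType R)
  (S : set (V * R)) : Prop :=
  exists M : R, forall p, S p -> `|p.1| <= M /\ `|p.2| <= M.

(* By the composition rule, c_n = Q_{γ_n←γ∞} c∞ with c∞ := Q_{γ∞←γ_0} c_0,
   and Q_{γ∞←γ∞} fixes c∞ since it is an injective idempotent on Fix T_{γ∞}.
   The Lipschitz-in-δ hypothesis at the single point (c∞, γ∞) then gives
   ‖c_n − c∞‖ ≤ L |γ_n − γ∞|, so c inherits the R-linear rate of γ. *)
From HB Require Import structures.
From mathcomp Require Import all_boot all_order all_algebra.
From mathcomp Require Import all_classical all_reals all_analysis.
Set Implicit Arguments. Unset Strict Implicit. Unset Printing Implicit Defensive.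
Import Order.TTheory GRing.Theory Num.Theory.
Import numFieldNormedType.Exports.
Local Open Scope classical_set_scope.
Local Open Scope ring_scope.

Lemma R_linear_cvg_dominated (R : realType) (V W : normedModType R)
    (a : nat -> V) (l : V) (b : nat -> W) (m : W) (L : R) :
  0 <= L -> (forall n, `|a n - l| <= L * `|b n - m|) ->
  R_linear_cvg b m -> R_linear_cvg a l.
Proof.
move=> L0 ab [C [r [C0 [r01 bC]]]].
exists (L * C), r; split; first exact: mulr_ge0.
split=> // n; apply: le_trans (ab n) _.
by rewrite -mulrA ler_wpM2l.
Qed.

Definition relocators_lipschitz_on_bounded (R : realType) (V : normedModType R)
    (Gamma : set R) (T : R -> V -> V) (Q : R -> R -> V -> V) : Prop :=
  forall S : set (V * R),
    S `<=` [set p | Gamma p.2 /\ Fix (T p.2) p.1] ->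
    bounded_pairs S ->
    exists L : R, 0 < L /\
      forall d p, Gamma d -> S p ->
        `|Q d p.2 p.1 - Q p.2 p.2 p.1| <= L * `|d - p.2|.

Section Relocators.
Variables (R : realType) (V : normedModType R).
Variables (Gamma : set R) (T : R -> V -> V) (Q : R -> R -> V -> V).
Hypothesis relocQ : fixed_point_relocators Gamma T Q.

Lemma relocator_fix g d x :
  Gamma g -> Gamma d -> Fix (T g) x -> Fix (T d) (Q d g x).
Proof.
case: relocQ => bijQ _ _ _ Gg Gd; case: (bijQ g d Gg Gd) => mapQ _ _.
exact: mapQ.
Qed.

Lemma relocator_comp g d e x : Gamma g -> Gamma d -> Gamma e ->
  Fix (T g) x -> Q e d (Q d g x) = Q e g x.
Proof. by case: relocQ => _ _ compQ _; exact: compQ. Qed.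

Lemma relocator_self g x : Gamma g -> Fix (T g) x -> Q g g x = x.
Proof.
move=> Gg Fx; case: relocQ => bijQ _ _ _; case: (bijQ g g Gg Gg) => _ injQ _.
apply: injQ; rewrite ?inE //; first exact: relocator_fix.
by rewrite relocator_comp.
Qed.

Lemma relocated_seqE (gam : nat -> R) (c : nat -> V) :
  (forall n, Gamma (gam n)) -> Fix (T (gam 0%N)) (c 0%N) ->
  (forall n, c n.+1 = Q (gam n.+1) (gam n) (c n)) ->
  forall n, c n = Q (gam n) (gam 0%N) (c 0%N).
Proof.
move=> Ggam Fc0 cS; elim=> [|n IHn]; first by rewrite relocator_self.
by rewrite cS IHn relocator_comp.
Qed.

Lemma relocator_lipschitz_at g x :
  relocators_lipschitz_on_bounded Gamma T Q -> Gamma g -> Fix (T g) x ->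
  exists2 L : R, 0 < L & forall d, Gamma d -> `|Q d g x - x| <= L * `|d - g|.
Proof.
move=> lipQ Gg Fx.
have pointS : [set (x, g)] `<=` [set p | Gamma p.2 /\ Fix (T p.2) p.1].
  by move=> p ->.
have boundedS : bounded_pairs [set (x, g)].
  by exists (Num.max `|x| `|g|) => p -> /=; rewrite !le_max !lexx orbT.
have [L [L0 QL]] := lipQ _ pointS boundedS.
exists L => // d Gd.
by rewrite -[X in _ - X](relocator_self Gg Fx); exact: (QL d (x, g)).
Qed.

End Relocators.

Theorem lemma3p5 (R : realType) (V : completeNormedModType R)
  (ip : V -> V -> R) (Gamma : set R) (T : R -> V -> V) (Q : R -> R -> V -> V)
  (gam : nat -> R) (gstar : R) (c : nat -> V) :
  is_inner_product ip ->
  Gamma `<=` [set x | 0 < x] ->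
  Gamma !=set0 ->
  (forall g, Gamma g -> Fix (T g) !=set0) ->
  fixed_point_relocators Gamma T Q ->
  (forall S : set (V * R),
     S `<=` [set p | Gamma p.2 /\ Fix (T p.2) p.1] ->
     bounded_pairs S ->
     exists L : R, 0 < L /\
       forall d p, Gamma d -> S p ->
         `|Q d p.2 p.1 - Q p.2 p.2 p.1| <= L * `|d - p.2|) ->
  (forall n, Gamma (gam n)) ->
  Gamma gstar ->
  R_linear_cvg gam gstar ->
  Fix (T (gam 0%N)) (c 0%N) ->
  (forall n, c n.+1 = Q (gam n.+1) (gam n) (c n)) ->
  (forall n, Fix (T (gam n)) (c n)) /\
  Fix (T gstar) (Q gstar (gam 0%N) (c 0%N)) /\
  R_linear_cvg c (Q gstar (gam 0%N) (c 0%N)).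
Proof.
move=> _ _ _ _ relocQ lipQ Ggam Gstar gam_cvg Fc0 cS.
have Ggam0 := Ggam 0%N.
have cE := relocated_seqE relocQ Ggam Fc0 cS.
have Fc n : Fix (T (gam n)) (c n) by rewrite cE; apply: (relocator_fix relocQ).
set cstar := Q gstar (gam 0%N) (c 0%N).
have Fcstar : Fix (T gstar) cstar by apply: (relocator_fix relocQ).
have cstarE n : c n = Q (gam n) gstar cstar by rewrite cE /cstar (relocator_comp relocQ) //; exact: Ggam.
have [L L0 QL] := relocator_lipschitz_at relocQ lipQ Gstar Fcstar.
split=> //; split=> //.
apply: (R_linear_cvg_dominated (ltW L0) _ gam_cvg) => n.
by rewrite cstarE; exact: QL.
Qed.
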